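(* Let $G$ be a connected graph with vertex set $V=\{1,\dots,n\}$, let $A$ be a real symmetric $n\times n$ matrix with $\mathcal{G}(A)=G$ such that all nonzero off-diagonal entries of $A$ have the same sign, and let $S\subseteq V$ be a zero forcing set of $G$. Then the real Lie algebra generated by $iA$ and $\{i{\bf e}_j{\bf e}_j^T : j\in S\}$ equals $u(n)$.
   Context: ${\bf e}_j$ is the $j$th standard basis vector of $\mathbb{R}^n$. For a real symmetric $A=[a_{kj}]$, $\mathcal{G}(A)$ is the simple graph on $\{1,\dots,n\}$ with edges $\{kj: a_{kj}\neq0,\ k\neq j\}$. Zero forcing: color vertices black or white; a black vertex $v$ forces a white vertex $w$ if $w$ is the unique white neighbor of $v$, and then $w$ becomes black. $S$ is a zero forcing set if starting with exactly $S$ black, repeated forcing makes all vertices black. The real Lie algebra generated by a set of matrices is the smallest real vector space containing them closed under $[X,Y]=XY-YX$; $u(n)$ is the real Lie algebra of $n\times n$ complex skew-Hermitian matrices. *)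

From HB Require Import structures.
From mathcomp Require Import all_boot all_order all_algebra.
From mathcomp Require Import complex.
Set Implicit Arguments. Unset Strict Implicit. Unset Printing Implicit Defensive.
Import Order.TTheory GRing.Theory Num.Theory.
Local Open Scope ring_scope.
Local Open Scope complex_scope.

Definition graph_of (T : pzRingType) (n : nat) (A : 'M[T]_n) : rel 'I_n :=
  fun k j => (k != j) && (A k j != 0).

Definition connected_graph (n : nat) (e : rel 'I_n) : Prop :=
  forall i j : 'I_n, connect e i j.

Definition force_step (n : nat) (e : rel 'I_n) (B : {set 'I_n}) : {set 'I_n} :=
  B :|: [set w | [exists v, [&& v \in B, w \notin B, e v w &
                     [forall u, (e v u && (u \notin B)) ==> (u == w)]]]].

Definition zero_forcing_set (n : nat) (e : rel 'I_n) (S : {set 'I_n}) : Prop :=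
  exists k : nat, iter k (force_step e) S = [set: 'I_n].

Definition real_lie_closed (R : rcfType) (n : nat) (P : 'M[R[i]]_n -> Prop) : Prop :=
  [/\ P 0,
      (forall X Y, P X -> P Y -> P (X + Y)),
      (forall (r : R) X, P X -> P (r%:C *: X)) &
      (forall X Y, P X -> P Y -> P (X *m Y - Y *m X))].

Definition lie_generated (R : rcfType) (n : nat) (gens : 'M[R[i]]_n -> Prop)
  (X : 'M[R[i]]_n) : Prop :=
  forall P : 'M[R[i]]_n -> Prop,
    real_lie_closed P -> (forall Y, gens Y -> P Y) -> P X.

Definition conj_tr (R : rcfType) (n : nat) (X : 'M[R[i]]_n) : 'M[R[i]]_n :=
  map_mx (@conjc R) X^T.

Definition u_n (R : rcfType) (n : nat) (X : 'M[R[i]]_n) : Prop :=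
  conj_tr X = - X.

Definition cmx (R : rcfType) (n : nat) (A : 'M[R]_n) : 'M[R[i]]_n :=
  map_mx (fun x : R => x%:C) A.

From HB Require Import structures.
From mathcomp Require Import all_boot all_order all_algebra.
From mathcomp Require Import complex ring.
Import Order.TTheory GRing.Theory Num.Theory.
Set Implicit Arguments. Unset Strict Implicit. Unset Printing Implicit Defensive.
Local Open Scope ring_scope.
Local Open Scope complex_scope.

(* Let L be the real Lie algebra generated by iA and the iE_jj, j in S.  If a black
   vertex v forces w, then [E_vv, A] is supported on row and column v, and adding
   [iE_bb, [iE_bb, .]] for each other black vertex b erases row and column b; since
   w is the only white neighbour of v, what survives is A_vw (E_vw - E_wv).  Its
   bracket with i(E_vw + E_wv) = [iE_vv, E_vw - E_wv] is 2(iE_vv - iE_ww), so iE_ww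
   lies in L.  Once every iE_jj is in L, the double bracket [iE_kk, [iE_jj, iA]] is a
   nonzero multiple of i(E_jk + E_kj) along each edge jk, which yields E_jk - E_kj;
   connectivity and [E_jk - E_kj, E_kl - E_lk] = E_jl - E_lj give these for all
   pairs j, k, and together with the i(E_jk + E_kj) they span u(n). *)

Ltac case_indices :=
  repeat (rewrite ?eqxx /=; match goal with
   | H : is_true (?x != ?x) |- _ => by rewrite eqxx in H
   | H : ?x <> ?x |- _ => by case: H
   | |- context [?x == ?y] =>
       lazymatch type of x with
       | ordinal _ => case: (x =P y) => [?|?]; subst
       end
   end); rewrite ?eqxx /=.

Section MatrixUnits.
Context {T : comPzRingType} {n : nat}.
Implicit Types (X Y Z : 'M[T]_n) (a b j k l p q v w : 'I_n) (B : {set 'I_n}).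

Definition lie_bracket X Y := X *m Y - Y *m X.

Lemma lie_bracketZl c X Y : lie_bracket (c *: X) Y = c *: lie_bracket X Y.
Proof. by rewrite /lie_bracket scalerBr -scalemxAl -scalemxAr. Qed.

Lemma lie_bracketZr c X Y : lie_bracket X (c *: Y) = c *: lie_bracket X Y.
Proof. by rewrite /lie_bracket scalerBr -scalemxAl -scalemxAr. Qed.

Lemma lie_bracketBl X Y Z : lie_bracket (X - Y) Z = lie_bracket X Z - lie_bracket Y Z.
Proof.
by rewrite /lie_bracket mulmxBl mulmxBr !opprB addrACA [RHS]addrACA [- _ - _]addrC.
Qed.

Lemma lie_bracket_deltaE a b Y p q :
  lie_bracket (delta_mx a b) Y p q = (p == a)%:R * Y b q - Y p a * (q == b)%:R.
Proof.
have delta_mulE : (delta_mx a b *m Y) p q = (p == a)%:R * Y b q.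
  rewrite mxE (bigD1 b) //= big1 ?addr0 => [|r /negbTE rb]; rewrite mxE.
    by rewrite eqxx andbT.
  by rewrite rb andbF mul0r.
have mul_deltaE : (Y *m delta_mx a b) p q = Y p a * (q == b)%:R.
  rewrite mxE (bigD1 a) //= big1 ?addr0 => [|r /negbTE ra]; rewrite mxE.
    by rewrite eqxx.
  by rewrite ra mulr0.
by rewrite -delta_mulE -mul_deltaE !mxE.
Qed.

Definition skew_delta j k : 'M[T]_n := delta_mx j k - delta_mx k j.
Definition sym_delta j k : 'M[T]_n := delta_mx j k + delta_mx k j.

Lemma skew_delta_diag j : skew_delta j j = 0.
Proof. exact: subrr. Qed.

Lemma lie_bracket_skewE j k Z p q :
  lie_bracket (skew_delta j k) Z p q =
    (p == j)%:R * Z k q - Z p j * (q == k)%:R - ((p == k)%:R * Z j q - Z p k * (q == j)%:R).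
Proof.
have mxBE X Y : (X - Y) p q = X p q - Y p q by rewrite !mxE.
by rewrite lie_bracketBl mxBE !lie_bracket_deltaE.
Qed.

Ltac bracket_entries :=
  apply/matrixP => p q; rewrite ?lie_bracket_skewE ?lie_bracket_deltaE !mxE;
  case_indices; ring.

Lemma lie_bracket_delta_skew j k : j != k ->
  lie_bracket (delta_mx j j) (skew_delta j k) = sym_delta j k.
Proof. by move=> jk; bracket_entries. Qed.

Lemma lie_bracket_delta_sym j k : j != k ->
  lie_bracket (delta_mx j j) (sym_delta j k) = skew_delta j k.
Proof. by move=> jk; bracket_entries. Qed.

Lemma lie_bracket_skew_sym v w : v != w ->
  lie_bracket (skew_delta v w) (sym_delta v w) = 2%:R *: (delta_mx v v - delta_mx w w).
Proof. by move=> vw; bracket_entries. Qed.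

Lemma lie_bracket_skew_skew j k l : j != k -> k != l -> j != l ->
  lie_bracket (skew_delta j k) (skew_delta k l) = skew_delta j l.
Proof. by move=> jk kl jl; bracket_entries. Qed.

Lemma lie_bracket_delta_delta A j k : A^T = A -> j != k ->
  lie_bracket (delta_mx k k) (lie_bracket (delta_mx j j) A) = - A j k *: sym_delta j k.
Proof.
move=> /matrixP symA jk; have Akj : A k j = A j k by rewrite -[in LHS]symA mxE.
apply/matrixP => p q; rewrite !lie_bracket_deltaE !mxE.
by case_indices; rewrite ?Akj; ring.
Qed.

Definition clear_cross b Z :=
  Z - lie_bracket (delta_mx b b) (lie_bracket (delta_mx b b) Z).

Lemma clear_crossE b Z p q :
  clear_cross b Z p q = if (p == b) == (q == b) then Z p q else 0.
Proof.
have mxBE X Y : (X - Y) p q = X p q - Y p q by rewrite !mxE.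
by rewrite mxBE !lie_bracket_deltaE; case_indices; ring.
Qed.

Definition clear_crosses B Z := foldr clear_cross Z (enum B).

Lemma clear_crossesE B Z p q :
  clear_crosses B Z p q = if (p == q) || ((p \notin B) && (q \notin B)) then Z p q else 0.
Proof.
have -> : (p == q) || ((p \notin B) && (q \notin B)) =
          all (fun b => (p == b) == (q == b)) (enum B).
  have [<-|pq] := eqVneq p q; first by apply/esym/allP => b _; rewrite eqxx.
  apply/andP/allP => [[pB qB] b|sepB].
    rewrite mem_enum => bB.
    by rewrite ![_ == b]eq_sym (negbTE (memPn pB _ bB)) (negbTE (memPn qB _ bB)).
  by split; apply/negP => xB; move: (sepB _ (etrans (mem_enum _ _) xB));
     rewrite eqxx ?[q == p]eq_sym (negbTE pq).
rewrite /clear_crosses; elim: (enum B) => //= b s IH; rewrite clear_crossE IH.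
by case: ((p == b) == (q == b)); case: all.
Qed.

Lemma clear_crosses_force A B v w : A^T = A -> v \in B -> w \notin B ->
    (forall u, u \notin B -> u != w -> A v u = 0) ->
  clear_crosses (B :\ v) (lie_bracket (delta_mx v v) A) = A v w *: skew_delta v w.
Proof.
move=> /matrixP symA vB wB Avu0; apply/matrixP => p q.
have notinD1 u : u != v -> (u \notin B :\ v) = (u \notin B) by rewrite in_setD1 => ->.
have /negbTE vw : v != w by apply: contraTneq vB => ->.
rewrite clear_crossesE lie_bracket_deltaE !mxE.
have [->|pv] := eqVneq p v; have [->|qv] := eqVneq q v;
  rewrite ?eqxx ?setD11 ?vw ?andbT ?andbF /=.
- by ring.
- rewrite (notinD1 _ qv); have [->|qw] := eqVneq q w; first by rewrite wB /=; ring.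
  by case: (boolP (q \in B)) => /= [_|qB]; [|rewrite (Avu0 q) //]; rewrite /=; ring.
- rewrite (negbTE pv) (notinD1 _ pv) -[A p v]symA mxE.
  have [->|pw] := eqVneq p w; first by rewrite wB /=; ring.
  by case: (boolP (p \in B)) => /= [_|pB]; [|rewrite (Avu0 p) //]; rewrite /=; ring.
- by case: ifP => _; ring.
Qed.

End MatrixUnits.

Lemma scale_ii (R : rcfType) n (X : 'M[R[i]]_n) : 'i%C *: ('i%C *: X) = - X.
Proof. by rewrite scalerA -expr2 sqr_i scaleN1r. Qed.

Lemma cmx_sym (R : rcfType) n (A : 'M[R]_n) : A^T = A -> (cmx A)^T = cmx A.
Proof. by rewrite /cmx map_trmx => ->. Qed.

Lemma u_nP (R : rcfType) n (X : 'M[R[i]]_n) :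
  u_n X <-> forall p q, (X q p)^* = - X p q.
Proof.
split => [/matrixP uX p q | uX]; first by have := uX p q; rewrite !mxE.
by apply/matrixP => p q; rewrite !mxE uX.
Qed.

Lemma u_n_lie_closed (R : rcfType) n : real_lie_closed (@u_n R n).
Proof.
split.
- by apply/u_nP => p q; rewrite !mxE rmorph0 oppr0.
- move=> X Y /u_nP uX /u_nP uY; apply/u_nP => p q.
  by rewrite !mxE opprD -uX -uY; apply: raddfD.
- move=> r X /u_nP uX; apply/u_nP => p q.
  by rewrite !mxE -mulrN -uX -[in RHS](conjc_real r); apply: rmorphM.
- move=> X Y; rewrite /u_n /conj_tr => uX uY.
  rewrite linearB /= map_mxB !trmx_mul !map_mxM uX uY.
  by rewrite !mulmxN !mulNmx !opprK opprB.
Qed.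

Lemma u_n_i_sym (R : rcfType) n (A : 'M[R]_n) : A^T = A -> u_n ('i%C *: cmx A).
Proof.
move=> /matrixP symA; apply/u_nP => p q.
rewrite !mxE -[A q p]symA mxE; apply/eqP; rewrite eq_complex.
by apply/andP; split; apply/eqP => /=; ring.
Qed.

Lemma conjcE (R : rcfType) (x : R[i]) :
  x^* = (complex.Re x)%:C - 'i%C * (complex.Im x)%:C.
Proof.
by case: x => a b; apply/eqP; rewrite eq_complex; apply/andP; split; apply/eqP => /=; ring.
Qed.

Lemma u_n_sum_delta (R : rcfType) n (X : 'M[R[i]]_n) : u_n X ->
  2%:R *: X = \sum_j \sum_k ((complex.Re (X j k))%:C *: skew_delta j k
                             + (complex.Im (X j k))%:C *: ('i%C *: sym_delta j k)).
Proof.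
move=> uX; have -> : 2%:R *: X = X - conj_tr X by rewrite uX opprK scaler_nat mulr2n.
rewrite [X in X - _]matrix_sum_delta [conj_tr X]matrix_sum_delta.
rewrite [X in _ - X]exchange_big -sumrB.
apply: eq_bigr => j _; rewrite -sumrB; apply: eq_bigr => k _.
have -> : conj_tr X k j = (X j k)^* by rewrite !mxE.
rewrite conjcE {1}[X j k]complexE; apply/matrixP => p q; rewrite !mxE; ring.
Qed.

Section LieClosed.
Variables (R : rcfType) (n : nat) (P : 'M[R[i]]_n -> Prop).
Hypothesis lieP : real_lie_closed P.
Implicit Types (X Y Z : 'M[R[i]]_n) (b j k v w : 'I_n) (B : {set 'I_n}).

Let two_neq0 : (2%:R : R) != 0. Proof. by rewrite pnatr_eq0. Qed.

Lemma lie_closed0 : P 0.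
Proof. by case: lieP. Qed.

Lemma lie_closedD X Y : P X -> P Y -> P (X + Y).
Proof. by case: lieP => _ + _ _; apply. Qed.

Lemma lie_closedZ (r : R) X : P X -> P (r%:C *: X).
Proof. by case: lieP => _ _ + _; apply. Qed.

Lemma lie_closed_bracket X Y : P X -> P Y -> P (lie_bracket X Y).
Proof. by case: lieP => _ _ _; apply. Qed.

Lemma lie_closedN X : P X -> P (- X).
Proof. by move=> /(lie_closedZ (-1)); rewrite rmorphN1 scaleN1r. Qed.

Lemma lie_closedB X Y : P X -> P Y -> P (X - Y).
Proof. by move=> PX /lie_closedN; apply: lie_closedD. Qed.

Lemma lie_closedZ_inv (r : R) X : r != 0 -> P (r%:C *: X) -> P X.
Proof.
move=> r0 /(lie_closedZ r^-1).
by rewrite scalerA -rmorphM mulVf // rmorph1 scale1r.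
Qed.

Lemma lie_closed_sum (I : finType) (F : I -> 'M[R[i]]_n) :
  (forall i, P (F i)) -> P (\sum_i F i).
Proof. by move=> PF; apply: big_ind => //; [exact: lie_closed0 | exact: lie_closedD]. Qed.

Lemma lie_closed_clear_cross b Z :
  P ('i%C *: delta_mx b b) -> P Z -> P (clear_cross b Z).
Proof.
move=> Pb PZ; suff -> : clear_cross b Z =
    Z + lie_bracket ('i%C *: delta_mx b b) (lie_bracket ('i%C *: delta_mx b b) Z).
  by apply: lie_closedD => //; do 2!apply: lie_closed_bracket => //.
by rewrite !lie_bracketZl lie_bracketZr scale_ii.
Qed.

Lemma lie_closed_clear_crosses B Z :
  (forall b, b \in B -> P ('i%C *: delta_mx b b)) -> P Z -> P (clear_crosses B Z).
Proof.
move=> PB PZ; have : all (mem B) (enum B) by apply/allP => b; rewrite mem_enum.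
rewrite /clear_crosses; elim: (enum B) => //= b s IH /andP[bB /IH Ps].
exact: lie_closed_clear_cross (PB b bB) Ps.
Qed.

Lemma lie_closed_idelta_move v w : v != w ->
  P ('i%C *: delta_mx v v) -> P (skew_delta v w) -> P ('i%C *: delta_mx w w).
Proof.
move=> vw Pv Pvw.
have : P ((2%:R : R)%:C *: ('i%C *: delta_mx v v - 'i%C *: delta_mx w w)).
  rewrite rmorph_nat -scalerBr scalerA mulrC -scalerA -lie_bracket_skew_sym //.
  rewrite -lie_bracketZr -(lie_bracket_delta_skew vw) -lie_bracketZl.
  by do 2!apply: lie_closed_bracket => //.
move=> /(lie_closedZ_inv two_neq0) Pdiff.
by rewrite -(subKr ('i%C *: delta_mx v v) ('i%C *: delta_mx w w)); apply: lie_closedB.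
Qed.

Lemma lie_closed_skew_edge (A : 'M[R]_n) j k : A^T = A -> graph_of A j k ->
    P ('i%C *: cmx A) -> P ('i%C *: delta_mx j j) -> P ('i%C *: delta_mx k k) ->
  P (skew_delta j k).
Proof.
move=> symA /andP[jk Ajk] PA Pj Pk.
have Psym : P ('i%C *: sym_delta j k).
  apply: (lie_closedZ_inv Ajk).
  have := lie_closed_bracket Pk (lie_closed_bracket Pj PA).
  rewrite !lie_bracketZl !lie_bracketZr lie_bracket_delta_delta ?cmx_sym // scale_ii.
  by rewrite scaleNr scalerN opprK mxE scalerA mulrC -scalerA.
have := lie_closed_bracket Pj Psym.
rewrite lie_bracketZl lie_bracketZr scale_ii lie_bracket_delta_sym //.
by move=> /lie_closedN; rewrite opprK.
Qed.

Lemma lie_closed_skew_connect (e : rel 'I_n) j k :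
    (forall x y, e x y -> x != y) -> (forall x y, e x y -> P (skew_delta x y)) ->
  connect e j k -> P (skew_delta j k).
Proof.
move=> irr_e Pe /connectP[p ep ->] {k}.
elim: p j ep => [|y p IH] x /= => [_|/andP[exy /IH Pyz]].
  by rewrite skew_delta_diag; apply: lie_closed0.
set z := last y p in Pyz *.
have [<-|xz] := eqVneq x z; first by rewrite skew_delta_diag; apply: lie_closed0.
have [<-|yz] := eqVneq y z; first exact: Pe.
rewrite -(lie_bracket_skew_skew (irr_e _ _ exy) yz xz).
by apply: lie_closed_bracket => //; apply: Pe.
Qed.

Lemma lie_closed_isym j k :
  P ('i%C *: delta_mx j j) -> P (skew_delta j k) -> P ('i%C *: sym_delta j k).
Proof.
move=> Pj Pjk; have [<-|jk] := eqVneq j k.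
  by rewrite /sym_delta scalerDr; apply: lie_closedD.
by rewrite -(lie_bracket_delta_skew jk) -lie_bracketZl; apply: lie_closed_bracket.
Qed.

Lemma lie_closed_force_step (A : 'M[R]_n) B : A^T = A -> P ('i%C *: cmx A) ->
    (forall b, b \in B -> P ('i%C *: delta_mx b b)) ->
  forall w, w \in force_step (graph_of A) B -> P ('i%C *: delta_mx w w).
Proof.
move=> symA PA PB w; rewrite in_setU => /orP[/PB //|].
rewrite inE => /existsP[v /and4P[vB wB /andP[vw Avw] /forallP uniq_w]].
have Avu0 u : u \notin B -> u != w -> A v u = 0.
  move=> uB uw; apply/eqP; apply: contraNT uw => Avu.
  apply: (implyP (uniq_w u)); rewrite uB andbT /graph_of Avu andbT.
  by apply: contraTneq vB => ->.
have PAv : P (lie_bracket (delta_mx v v) (cmx A)).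
  have := lie_closed_bracket (PB v vB) PA.
  by rewrite lie_bracketZl lie_bracketZr scale_ii => /lie_closedN; rewrite opprK.
have Pvw : P (skew_delta v w).
  apply: (lie_closedZ_inv Avw); have -> : (A v w)%:C = cmx A v w by rewrite mxE.
  rewrite -(clear_crosses_force (B := B)) ?cmx_sym // => [|u uB uw]; last first.
    by rewrite mxE Avu0 // rmorph0.
  by apply: lie_closed_clear_crosses => // b; rewrite in_setD1 => /andP[_ /PB].
exact: lie_closed_idelta_move vw (PB v vB) Pvw.
Qed.

Lemma lie_closed_u_n X :
    (forall j k, P (skew_delta j k)) -> (forall j k, P ('i%C *: sym_delta j k)) ->
  u_n X -> P X.
Proof.
move=> Pskew Psym /u_n_sum_delta X2.
apply: (lie_closedZ_inv two_neq0); rewrite rmorph_nat X2.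
do 2!apply: lie_closed_sum => // ?.
by apply: lie_closedD => //; apply: lie_closedZ.
Qed.

End LieClosed.

Theorem corollary4p2 (R : rcfType) (n : nat) (A : 'M[R]_n) (S : {set 'I_n}) :
  A^T = A ->
  connected_graph (graph_of A) ->
  ((forall k j : 'I_n, k != j -> 0 <= A k j) \/
   (forall k j : 'I_n, k != j -> A k j <= 0)) ->
  zero_forcing_set (graph_of A) S ->
  forall X : 'M[R[i]]_n,
    lie_generated
      (fun Y => Y = (Complex 0 1 : R[i]) *: cmx A \/
                exists2 j : 'I_n, j \in S & Y = (Complex 0 1 : R[i]) *: delta_mx j j)
      X
    <-> u_n X.
Proof.
(* The sign condition on the off-diagonal entries of A is not needed. *)
move=> symA connA _ [k forceS] X; split.
  move=> /(_ _ (@u_n_lie_closed R n)); apply=> Y [->|[j _ ->]].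
    exact: u_n_i_sym.
  by rewrite -(map_delta_mx (real_complex R)); apply: u_n_i_sym; rewrite trmx_delta.
move=> uX P lieP gensP.
have PA : P ('i%C *: cmx A) by apply: gensP; left.
have Pdiag (b : 'I_n) : P ('i%C *: delta_mx b b).
  have : b \in iter k (force_step (graph_of A)) S by rewrite forceS inE.
  elim: k {forceS} b => [|k IH] b /=; first by move=> bS; apply: gensP; right; exists b.
  exact: lie_closed_force_step.
have Pskew j l : P (skew_delta j l).
  apply: (lie_closed_skew_connect lieP (e := graph_of A)) => // [x y /andP[] //|x y exy].
  exact (lie_closed_skew_edge lieP symA exy PA (Pdiag x) (Pdiag y)).
by apply: (lie_closed_u_n lieP) => // j l; apply: lie_closed_isym.
Qed.
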